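(* Every rigid subcategory of $\mathcal B$ is $\mathcal R$-rigid.
   Context: $(\mathcal B,\mathbb E,\mathfrak s)$ is a Krull–Schmidt, Hom-finite, $k$-linear extriangulated category ($k$ a field) with enough projectives $\mathcal P$ and enough injectives $\mathcal I$. Subcategories are full and closed under isomorphisms, direct sums and direct summands. $\mathcal R$ is a contravariantly finite rigid subcategory with $\mathcal P\subsetneq\mathcal R$. A subcategory $\mathcal C$ is rigid if $\mathbb E(\mathcal C,\mathcal C)=0$. For each $N\in\mathcal B$ fix an $\mathbb E$-triangle $N\to I_N\xrightarrow{i_N}\Sigma N\dashrightarrow$ with $I_N\in\mathcal I$. A subcategory $\mathscr X$ is $\mathcal R$-rigid if for all $M,N\in\mathscr X$ every morphism $M\to\Sigma N$ factoring through an object of $\mathcal R$ factors through $i_N$. *)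

From HB Require Import structures.
From mathcomp Require Import all_boot all_order all_algebra.
Set Implicit Arguments. Unset Strict Implicit. Unset Printing Implicit Defensive.
Import GRing.Theory.
Local Open Scope ring_scope.

(* Data of a k-linear category with an extension bifunctor E and a
   realization s.  chom-spaces are finite dimensional k-vector spaces
   (vectType), i.e. the category is k-linear and chom-finite.
   Convention: [Ext C A] is E(C,A); [push a] is a_* and [pull c] is c^*;
   [realizes d x y] means s(d) = [A --x--> B --y--> C]. *)
Record extri_data (k : fieldType) := ExtriData {
  obj : Type;
  chom : obj -> obj -> vectType k;
  cmp : forall A B C : obj, chom B C -> chom A B -> chom A C;
  idm : forall A : obj, chom A A;
  Ext : obj -> obj -> lmodType k;
  push : forall A A' C : obj, chom A A' -> Ext C A -> Ext C A';
  pull : forall A C C' : obj, chom C' C -> Ext C A -> Ext C' A;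
  realizes : forall A B C : obj, Ext C A -> chom A B -> chom B C -> Prop
}.
Arguments obj {k}.
Arguments chom {k} _.
Arguments cmp {k} _ {A B C}.
Arguments idm {k} _.
Arguments Ext {k} _.
Arguments push {k} _ {A A' C}.
Arguments pull {k} _ {A C C'}.
Arguments realizes {k} _ {A B C}.

Section ExtriDefs.
Variables (k : fieldType) (cB : extri_data k).
Local Notation obj := (obj cB).
Local Notation chom := (chom cB).
Local Notation cmp := (cmp cB).
Local Notation idm := (idm cB).
Local Notation Ext := (Ext cB).
Local Notation push := (push cB).
Local Notation pull := (pull cB).
Local Notation realizes := (realizes cB).

Definition is_iso (A B : obj) (f : chom A B) : Prop :=
  exists g : chom B A, cmp g f = idm A /\ cmp f g = idm B.

Definition isomorphic (A B : obj) : Prop := exists f : chom A B, is_iso f.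

Definition is_biproduct (A B S : obj) (i1 : chom A S) (i2 : chom B S)
  (p1 : chom S A) (p2 : chom S B) : Prop :=
  cmp p1 i1 = idm A /\ cmp p2 i2 = idm B /\ cmp p1 i2 = 0 /\
  cmp p2 i1 = 0 /\ cmp i1 p1 + cmp i2 p2 = idm S.

Definition biproduct (A B S : obj) : Prop :=
  exists (i1 : chom A S) (i2 : chom B S) (p1 : chom S A) (p2 : chom S B),
    is_biproduct i1 i2 p1 p2.

Definition klinear_cat_axioms : Prop :=
  (forall (A B C D : obj) (h : chom C D) (g : chom B C) (f : chom A B),
      cmp h (cmp g f) = cmp (cmp h g) f) /\
  (forall (A B : obj) (f : chom A B), cmp (idm B) f = f) /\
  (forall (A B : obj) (f : chom A B), cmp f (idm A) = f) /\
  (forall (A B C : obj) (r : k) (g g' : chom B C) (f : chom A B),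
      cmp (r *: g + g') f = r *: cmp g f + cmp g' f) /\
  (forall (A B C : obj) (r : k) (g : chom B C) (f f' : chom A B),
      cmp g (r *: f + f') = r *: cmp g f + cmp g f').

Definition additive_axioms : Prop :=
  (exists Z : obj, idm Z = 0) /\
  (forall A B : obj, exists S : obj, biproduct A B S).

Definition ET1 : Prop :=
  (forall (A A' C : obj) (a : chom A A') (r : k) (d d' : Ext C A),
      push a (r *: d + d') = r *: push a d + push a d') /\
  (forall (A C C' : obj) (c : chom C' C) (r : k) (d d' : Ext C A),
      pull c (r *: d + d') = r *: pull c d + pull c d') /\
  (forall (A A' C : obj) (r : k) (a a' : chom A A') (d : Ext C A),
      push (r *: a + a') d = r *: push a d + push a' d) /\
  (forall (A C C' : obj) (r : k) (c c' : chom C' C) (d : Ext C A),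
      pull (r *: c + c') d = r *: pull c d + pull c' d) /\
  (forall (A C : obj) (d : Ext C A), push (idm A) d = d) /\
  (forall (A C : obj) (d : Ext C A), pull (idm C) d = d) /\
  (forall (A A' A'' C : obj) (a : chom A A') (a' : chom A' A'') (d : Ext C A),
      push (cmp a' a) d = push a' (push a d)) /\
  (forall (A C C' C'' : obj) (c : chom C' C) (c' : chom C'' C') (d : Ext C A),
      pull (cmp c c') d = pull c' (pull c d)) /\
  (forall (A A' C C' : obj) (a : chom A A') (c : chom C' C) (d : Ext C A),
      push a (pull c d) = pull c (push a d)).

Definition equiv_seq (A B B' C : obj) (x : chom A B) (y : chom B C)
  (x' : chom A B') (y' : chom B' C) : Prop :=
  exists b : chom B B', is_iso b /\ cmp b x = x' /\ cmp y' b = y.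

Definition realization_is_class : Prop :=
  forall (A C : obj) (d : Ext C A),
    (exists (B : obj) (x : chom A B) (y : chom B C), realizes d x y) /\
    (forall (B B' : obj) (x : chom A B) (y : chom B C) (x' : chom A B')
            (y' : chom B' C),
       realizes d x y -> (realizes d x' y' <-> equiv_seq x y x' y')).

Definition realization_morph : Prop :=
  forall (A B C A' B' C' : obj) (x : chom A B) (y : chom B C)
         (x' : chom A' B') (y' : chom B' C') (d : Ext C A) (d' : Ext C' A'),
    realizes d x y -> realizes d' x' y' ->
    forall (a : chom A A') (c : chom C C'), push a d = pull c d' ->
    exists b : chom B B', cmp b x = cmp x' a /\ cmp y' b = cmp c y.

Definition realization_additive : Prop :=
  (forall (A C S : obj) (i1 : chom A S) (i2 : chom C S) (p1 : chom S A)
          (p2 : chom S C),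
      is_biproduct i1 i2 p1 p2 -> realizes (0 : Ext C A) i1 p2) /\
  (forall (A B C A' B' C' SA SB SC : obj)
          (x : chom A B) (y : chom B C) (x' : chom A' B') (y' : chom B' C')
          (d : Ext C A) (d' : Ext C' A')
          (iA1 : chom A SA) (iA2 : chom A' SA) (pA1 : chom SA A) (pA2 : chom SA A')
          (iB1 : chom B SB) (iB2 : chom B' SB) (pB1 : chom SB B) (pB2 : chom SB B')
          (iC1 : chom C SC) (iC2 : chom C' SC) (pC1 : chom SC C) (pC2 : chom SC C')
          (t : Ext SC SA),
      realizes d x y -> realizes d' x' y' ->
      is_biproduct iA1 iA2 pA1 pA2 -> is_biproduct iB1 iB2 pB1 pB2 ->
      is_biproduct iC1 iC2 pC1 pC2 ->
      push pA1 (pull iC1 t) = d -> push pA1 (pull iC2 t) = 0 ->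
      push pA2 (pull iC1 t) = 0 -> push pA2 (pull iC2 t) = d' ->
      realizes t (cmp iB1 (cmp x pA1) + cmp iB2 (cmp x' pA2))
                 (cmp iC1 (cmp y pB1) + cmp iC2 (cmp y' pB2))).

Definition ET2 : Prop :=
  realization_is_class /\ realization_morph /\ realization_additive.

Definition ET3 : Prop :=
  forall (A B C A' B' C' : obj) (x : chom A B) (y : chom B C)
         (x' : chom A' B') (y' : chom B' C') (d : Ext C A) (d' : Ext C' A')
         (a : chom A A') (b : chom B B'),
    realizes d x y -> realizes d' x' y' -> cmp b x = cmp x' a ->
    exists c : chom C C', cmp c y = cmp y' b /\ push a d = pull c d'.

Definition ET3op : Prop :=
  forall (A B C A' B' C' : obj) (x : chom A B) (y : chom B C)
         (x' : chom A' B') (y' : chom B' C') (d : Ext C A) (d' : Ext C' A')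
         (b : chom B B') (c : chom C C'),
    realizes d x y -> realizes d' x' y' -> cmp y' b = cmp c y ->
    exists a : chom A A', cmp x' a = cmp b x /\ push a d = pull c d'.

Definition ET4 : Prop :=
  forall (A B C D F : obj) (f : chom A B) (f' : chom B D) (g : chom B C)
         (g' : chom C F) (d : Ext D A) (d' : Ext F B),
    realizes d f f' -> realizes d' g g' ->
    exists (E : obj) (h' : chom C E) (dd : chom D E) (e : chom E F)
           (d'' : Ext E A),
      realizes d'' (cmp g f) h' /\ realizes (push f' d') dd e /\
      cmp dd f' = cmp h' g /\ cmp e h' = g' /\
      pull dd d'' = d /\ push f d'' = pull e d'.

Definition ET4op : Prop :=
  forall (D A B F C : obj) (f : chom D A) (f' : chom A B) (g : chom F B)
         (g' : chom B C) (d : Ext B D) (d' : Ext C F),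
    realizes d f f' -> realizes d' g g' ->
    exists (E : obj) (h : chom E A) (dd : chom D E) (e : chom E F)
           (d'' : Ext C E),
      realizes d'' h (cmp g' f') /\ realizes (pull g d) dd e /\
      cmp h dd = f /\ cmp f' h = cmp g e /\
      push e d'' = d' /\ push dd d = pull g' d''.

Definition extriangulated : Prop :=
  klinear_cat_axioms /\ additive_axioms /\ ET1 /\ ET2 /\ ET3 /\ ET3op /\
  ET4 /\ ET4op.

Definition conflation (A B C : obj) (x : chom A B) (y : chom B C) : Prop :=
  exists d : Ext C A, realizes d x y.

Definition projective_obj (P : obj) : Prop :=
  forall (A B C : obj) (x : chom A B) (y : chom B C), conflation x y ->
  forall f : chom P C, exists g : chom P B, cmp y g = f.

Definition injective_obj (I : obj) : Prop :=
  forall (A B C : obj) (x : chom A B) (y : chom B C), conflation x y ->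
  forall f : chom A I, exists g : chom B I, cmp g x = f.

Definition enough_projectives : Prop :=
  forall C : obj, exists (A P : obj) (x : chom A P) (y : chom P C),
    projective_obj P /\ conflation x y.

Definition enough_injectives : Prop :=
  forall A : obj, exists (I C : obj) (x : chom A I) (y : chom I C),
    injective_obj I /\ conflation x y.

Definition invertible (A : obj) (f : chom A A) : Prop :=
  exists g : chom A A, cmp g f = idm A /\ cmp f g = idm A.

Definition local_object (A : obj) : Prop :=
  idm A <> 0 /\
  forall f g : chom A A, ~ invertible f -> ~ invertible g -> ~ invertible (f + g).

Definition finite_direct_sum (X : obj) (n : nat) (Aj : 'I_n -> obj) : Prop :=
  exists (i : forall j, chom (Aj j) X) (p : forall j, chom X (Aj j)),
    (forall j, cmp (p j) (i j) = idm (Aj j)) /\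
    (forall j j', j <> j' -> cmp (p j') (i j) = 0) /\
    \sum_(j < n) cmp (i j) (p j) = idm X.

Definition krull_schmidt : Prop :=
  forall X : obj, exists (n : nat) (Aj : 'I_n -> obj),
    finite_direct_sum X Aj /\ forall j, local_object (Aj j).

Definition subcategory (S : obj -> Prop) : Prop :=
  (forall X Y : obj, isomorphic X Y -> S X -> S Y) /\
  (forall X Y Z : obj, biproduct X Y Z -> S X -> S Y -> S Z) /\
  (forall X Y Z : obj, biproduct X Y Z -> S Z -> S X /\ S Y).

Definition rigid (S : obj -> Prop) : Prop :=
  forall M N : obj, S M -> S N -> forall d : Ext M N, d = 0.

Definition contravariantly_finite (S : obj -> Prop) : Prop :=
  forall X : obj, exists (R0 : obj) (f : chom R0 X), S R0 /\
    forall (R1 : obj) (g : chom R1 X), S R1 -> exists h : chom R1 R0, cmp f h = g.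

Definition projectives_properly_in (S : obj -> Prop) : Prop :=
  (forall P : obj, projective_obj P -> S P) /\ (exists Y : obj, S Y /\ ~ projective_obj Y).

(* R-rigidity w.r.t. the fixed E-triangles N -> I_N --iN N--> Sigma N *)
Definition R_rigid (R : obj -> Prop) (I Sg : obj -> obj)
  (iN : forall N, chom (I N) (Sg N)) (X : obj -> Prop) : Prop :=
  forall M N : obj, X M -> X N -> forall f : chom M (Sg N),
    (exists (R0 : obj) (u : chom M R0) (v : chom R0 (Sg N)), R R0 /\ f = cmp v u) ->
    exists g : chom M (I N), f = cmp (iN N) g.

End ExtriDefs.

(* The E-triangle N -> I_N -> ΣN with class η_N induces the exact sequence
   Hom(M, I_N) -> Hom(M, ΣN) -> E(M, N), the second map being f |-> f^* η_N.
   For M, N in a rigid subcategory E(M, N) = 0, so every f : M -> ΣN factors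
   through i_N, whether or not it factors through R.  Exactness at Hom(M, ΣN)
   is the usual argument: if f^* η_N = 0, compare the split E-triangle
   N -> N ⊕ M -> M realizing 0 with the one realizing η_N via (ET2). *)
From HB Require Import structures.
From mathcomp Require Import all_boot all_order all_algebra.

Set Implicit Arguments.
Unset Strict Implicit.
Unset Printing Implicit Defensive.
Local Open Scope ring_scope.

Section Extriangulated.
Variables (k : fieldType) (cB : extri_data k).
Hypothesis Hext : extriangulated cB.
Local Notation obj := (obj cB).
Local Notation chom := (chom cB).
Local Notation cmp := (cmp cB).
Local Notation idm := (idm cB).
Local Notation Ext := (Ext cB).
Local Notation push := (push cB).
Local Notation pull := (pull cB).
Local Notation realizes := (realizes cB).

Lemma cmpA (A B C D : obj) (h : chom C D) (g : chom B C) (f : chom A B) :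
  cmp h (cmp g f) = cmp (cmp h g) f.
Proof. by case: Hext => [[assoc _] _]. Qed.

Lemma cmpf1 (A B : obj) (f : chom A B) : cmp f (idm A) = f.
Proof. by case: Hext => [[_ [_ [idr _]]] _]. Qed.

Lemma push_id0 (A C : obj) : push (idm A) (0 : Ext C A) = 0.
Proof. by case: Hext => [_ [_ [[_ [_ [_ [_ [push_id _]]]]] _]]]. Qed.

Lemma realizes0_split (A C : obj) :
  exists (B : obj) (x : chom A B) (y : chom B C) (s : chom C B),
    realizes (0 : Ext C A) x y /\ cmp y s = idm C.
Proof.
case: Hext => [_ [[_ biprod] [_ [[_ [_ [split_real _]]] _]]]].
have [S [i1 [i2 [p1 [p2 Hbi]]]]] := biprod A C.
exists S, i1, p2, i2; split; first exact: split_real Hbi.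
by case: Hbi => _ [].
Qed.

Lemma pull_eq0_factors (A B C C' : obj) (x : chom A B) (y : chom B C)
    (d : Ext C A) (c : chom C' C) :
  realizes d x y -> pull c d = 0 -> exists g : chom C' B, cmp y g = c.
Proof.
move=> Hd Hcd.
have [S [x0 [y0 [s [H0 Hs]]]]] := realizes0_split A C'.
have Hmorph : realization_morph cB by case: Hext => [_ [_ [_ [[_ []]]]]].
have [b [_ Hb]] := Hmorph _ _ _ _ _ _ _ _ _ _ _ _ H0 Hd (idm A) c
  (etrans (push_id0 _ _) (esym Hcd)).
by exists (cmp b s); rewrite cmpA Hb -cmpA Hs cmpf1.
Qed.

End Extriangulated.

Theorem lemma3p2 (k : fieldType) (cB : extri_data k)
  (Hext : extriangulated cB) (HKS : krull_schmidt cB)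
  (HP : enough_projectives cB) (HI : enough_injectives cB)
  (R : obj cB -> Prop) (HRsub : subcategory R)
  (HRcf : contravariantly_finite R) (HRrig : rigid R)
  (HPR : projectives_properly_in R)
  (I Sg : obj cB -> obj cB) (iota : forall N, chom cB N (I N))
  (iN : forall N, chom cB (I N) (Sg N)) (eta : forall N, Ext cB (Sg N) N)
  (Htri : forall N, injective_obj (I N) /\ realizes cB (eta N) (iota N) (iN N))
  (X : obj cB -> Prop) (HX : subcategory X) :
  rigid X -> R_rigid R iN X.
Proof.
move=> HXrig M N XM XN f _.
have [_ Heta] := Htri N.
have [g Hg] := pull_eq0_factors Hext (c := f) Heta (HXrig M N XM XN _).
by exists g.
Qed.
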